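(* Let $\|\cdot\|$ be a URTC-norm on $\mathbb{R}^2$, let $d>0$, and let $b_1,b_2\in\mathbb{R}^2$ with $\|b_1\|=\|b_2\|=\|b_1-b_2\|=d$. Then the triple $(0,b_1,b_2)$ can be extended to a $d$-probe $(0,b_1,b_2,b_3,c_1,c_2,c_3)$, and in every such $d$-probe necessarily $b_3=b_1+b_2$. Moreover, $b_1+b_2\neq 0$.
   Context: A norm $\|\cdot\|$ on $\mathbb{R}^2$ is called a URTC-norm if for every $a,b\in\mathbb{R}^2$ with $\|a-b\|=1$ the system $\|a-x\|=1$, $\|b-x\|=1$ is satisfied by exactly two points $x\in\mathbb{R}^2$. For $d>0$, a 7-tuple $(a,b_1,b_2,b_3,c_1,c_2,c_3)$ of points of $\mathbb{R}^2$ is a $d$-probe if $d=\|a-b_1\|=\|a-b_2\|=\|b_1-b_2\|=\|b_1-b_3\|=\|b_2-b_3\|=\|a-c_1\|=\|a-c_2\|=\|c_1-c_2\|=\|c_1-c_3\|=\|c_2-c_3\|=\|b_3-c_3\|$. *)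

From Stdlib Require Import Reals.
Open Scope R_scope.

Definition pt := (R * R)%type.
Definition padd (x y : pt) : pt := (fst x + fst y, snd x + snd y).
Definition psub (x y : pt) : pt := (fst x - fst y, snd x - snd y).
Definition pscale (k : R) (x : pt) : pt := (k * fst x, k * snd x).
Definition p0 : pt := (0, 0).

Definition is_norm (N : pt -> R) : Prop :=
  (forall x, 0 <= N x) /\
  (forall x, N x = 0 -> x = p0) /\
  (forall k x, N (pscale k x) = Rabs k * N x) /\
  (forall x y, N (padd x y) <= N x + N y).

Definition URTC (N : pt -> R) : Prop :=
  forall a b : pt, N (psub a b) = 1 ->
    exists x1 x2 : pt, x1 <> x2 /\
      forall x, (N (psub a x) = 1 /\ N (psub b x) = 1) <-> (x = x1 \/ x = x2).

Definition probe (N : pt -> R) (d : R) (a b1 b2 b3 c1 c2 c3 : pt) : Prop :=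
  d = N (psub a b1) /\ d = N (psub a b2) /\ d = N (psub b1 b2) /\
  d = N (psub b1 b3) /\ d = N (psub b2 b3) /\
  d = N (psub a c1) /\ d = N (psub a c2) /\ d = N (psub c1 c2) /\
  d = N (psub c1 c3) /\ d = N (psub c2 c3) /\
  d = N (psub b3 c3).

(* By URTC, two points at distance [d] have exactly two common [d]-neighbours, so
   for an equilateral triangle [a b x] these are [x] and [a + b - x].  In a probe,
   [b3] is therefore [0] or [b1 + b2], and [c3] is [0] or [c1 + c2]; [b3 = 0] forces
   [c3 = c1 + c2] with [||c1 + c2|| = d], and then [0], [c2] and [2 c1 + c2] are
   three common neighbours of [c1] and [c1 + c2].
   For existence (with [b1, b2] counterclockwise), let [c1] run along the sphere of
   radius [d] from [b1] to [b2], and let [c2] be the third vertex of the triangle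
   [0 c1 c2] to the left of [c1]: it is the unique root of a continuous function,
   hence depends continuously on [c1].  Then [||b1 + b2 - c1 - c2|| - d] goes from
   [-d] (where [c1, c2 = b1, b2]) to [||2 b1 - b2|| - d >= 0] (where
   [c1, c2 = b2, b2 - b1]) and the IVT gives [c1, c2], with [b3 = b1 + b2] and
   [c3 = c1 + c2]. *)

From Stdlib Require Import Reals Lra Psatz.
Open Scope R_scope.

Ltac pt_ring :=
  apply injective_projections; unfold padd, psub, pscale, p0; simpl;
  solve [ring | field; lra].

Definition det (x y : pt) : R := fst x * snd y - snd x * fst y.

Definition sqnorm (x : pt) : R := fst x * fst x + snd x * snd x.

Definition rot90 (x : pt) : pt := (- snd x, fst x).

(* A path from [p] (at [s = 0]) to [-p] (at [s = 1]) through the open half-plane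
   to the left of [p]. *)
Definition turn (p : pt) (s : R) : pt :=
  padd (pscale (1 - 2 * s) p) (pscale (4 * s * (1 - s)) (rot90 p)).

Lemma det_scale a b x y : det (pscale a x) (pscale b y) = a * b * det x y.
Proof. unfold det, pscale; simpl; ring. Qed.

Lemma det_scale_r x b y : det x (pscale b y) = b * det x y.
Proof. unfold det, pscale; simpl; ring. Qed.

Lemma sqnorm_pos x : x <> p0 -> 0 < sqnorm x.
Proof.
  intros Hx. unfold sqnorm. destruct (Req_dec (fst x) 0), (Req_dec (snd x) 0); try nra.
  exfalso; apply Hx, injective_projections; auto.
Qed.

Lemma turn_0 p : turn p 0 = p.
Proof. unfold turn, rot90. pt_ring. Qed.

Lemma turn_1 p : turn p 1 = pscale (-1) p.
Proof. unfold turn, rot90. pt_ring. Qed.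

Lemma det_turn p s : det p (turn p s) = 4 * s * (1 - s) * sqnorm p.
Proof. unfold det, turn, rot90, sqnorm, padd, pscale; simpl; ring. Qed.

Lemma det_turn_turn p s s' :
  det (turn p s) (turn p s') = 4 * (s' - s) * ((1 - s) * (1 - s') + s * s') * sqnorm p.
Proof. unfold det, turn, rot90, sqnorm, padd, pscale; simpl; ring. Qed.

(* [rot90 p] is orthogonal to [p] and of the same Euclidean length. *)
Lemma turn_neq0 p s : p <> p0 -> turn p s <> p0.
Proof.
  intros Hp Hturn.
  assert (Hsq : sqnorm (turn p s)
    = ((1 - 2 * s) * (1 - 2 * s) + (4 * s * (1 - s)) * (4 * s * (1 - s))) * sqnorm p)
    by (unfold sqnorm, turn, rot90, padd, pscale; simpl; ring).
  rewrite Hturn in Hsq. unfold sqnorm at 1, p0 in Hsq; simpl in Hsq.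
  assert (Hcoef : 0 < (1 - 2 * s) * (1 - 2 * s) + (4 * s * (1 - s)) * (4 * s * (1 - s))).
  { destruct (Req_dec s (1 / 2)) as [Hs|Hs].
    - subst s. lra.
    - assert (0 < (1 - 2 * s) * (1 - 2 * s)) by (apply Rsqr_pos_lt; lra).
      assert (0 <= (4 * s * (1 - s)) * (4 * s * (1 - s))) by apply Rle_0_sqr. lra. }
  assert (Hp' := sqnorm_pos p Hp). nra.
Qed.

Lemma continuity_pt_cst c t : continuity_pt (fun _ => c) t.
Proof. apply continuity_pt_const. intros ? ?; reflexivity. Qed.

Lemma continuity_pt_identity t : continuity_pt (fun x => x) t.
Proof. apply derivable_continuous_pt, derivable_pt_id. Qed.

Definition pt_continuity_pt (F : R -> pt) (t : R) : Prop :=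
  continuity_pt (fun x => fst (F x)) t /\ continuity_pt (fun x => snd (F x)) t.

Lemma pt_continuity_pt_const c t : pt_continuity_pt (fun _ => c) t.
Proof. split; apply continuity_pt_cst. Qed.

Lemma pt_continuity_pt_padd F G t :
  pt_continuity_pt F t -> pt_continuity_pt G t ->
  pt_continuity_pt (fun x => padd (F x) (G x)) t.
Proof. intros [] []; split; apply continuity_pt_plus; auto. Qed.

Lemma pt_continuity_pt_psub F G t :
  pt_continuity_pt F t -> pt_continuity_pt G t ->
  pt_continuity_pt (fun x => psub (F x) (G x)) t.
Proof. intros [] []; split; apply continuity_pt_minus; auto. Qed.

Lemma pt_continuity_pt_pscale k F t :
  continuity_pt k t -> pt_continuity_pt F t ->
  pt_continuity_pt (fun x => pscale (k x) (F x)) t.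
Proof. intros ? []; split; apply continuity_pt_mult; auto. Qed.

Ltac real_continuity :=
  repeat first [ assumption | apply continuity_pt_cst | apply continuity_pt_identity
               | apply continuity_pt_minus | apply continuity_pt_mult | apply continuity_pt_opp ].

Lemma pt_continuity_pt_turn F k t :
  pt_continuity_pt F t -> continuity_pt k t ->
  pt_continuity_pt (fun x => turn (F x) (k x)) t.
Proof.
  intros [HF1 HF2] Hk. unfold turn, rot90.
  apply pt_continuity_pt_padd; apply pt_continuity_pt_pscale; try split; real_continuity.
Qed.

Lemma unique_root_sign (h : R -> R) s0 :
  continuity h -> h 0 < 0 -> 0 < h 1 -> 0 <= s0 <= 1 ->
  (forall s, 0 <= s <= 1 -> h s = 0 -> s = s0) ->
  (forall s, 0 <= s < s0 -> h s < 0) /\ (forall s, s0 < s <= 1 -> 0 < h s).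
Proof.
  intros Hc H0 H1 Hs0 Huniq. split; intros s Hs.
  - destruct (Rtotal_order (h s) 0) as [Hneg|[Hzero|Hpos]]; auto.
    + apply Huniq in Hzero; lra.
    + assert (Hs' : 0 < s) by (destruct (Req_dec s 0); subst; lra).
      destruct (IVT h 0 s Hc Hs' H0 Hpos) as (z & Hz & Hhz).
      apply Huniq in Hhz; lra.
  - destruct (Rtotal_order (h s) 0) as [Hneg|[Hzero|Hpos]]; auto.
    + assert (Hs' : s < 1) by (destruct (Req_dec s 1); subst; lra).
      destruct (IVT h s 1 Hc Hs' Hneg H1) as (z & Hz & Hhz).
      apply Huniq in Hhz; lra.
    + apply Huniq in Hzero; lra.
Qed.

(* Only continuity in each variable separately is needed: a sign change of
   [g t0] around its root persists for [t] near [t0], and the IVT then traps the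
   root of [g t] in the same interval. *)
Lemma unique_root_continuity_pt (g : R -> R -> R) (r : R -> R) t0 :
  (forall s, continuity_pt (fun t => g t s) t0) ->
  (forall t, continuity (g t)) ->
  (forall t, g t 0 < 0) -> (forall t, 0 < g t 1) ->
  (forall t, 0 <= r t <= 1 /\ g t (r t) = 0) ->
  (forall t s, 0 <= s <= 1 -> g t s = 0 -> s = r t) ->
  continuity_pt r t0.
Proof.
  intros Hct Hcs Hg0 Hg1 Hr Huniq eps Heps.
  destruct (Hr t0) as [Hr0 Hroot].
  assert (Hs0 : 0 < r t0 < 1).
  { specialize (Hg0 t0). specialize (Hg1 t0).
    destruct (Req_dec (r t0) 0) as [E|]; [rewrite E in Hroot; lra|].
    destruct (Req_dec (r t0) 1) as [E|]; [rewrite E in Hroot; lra|]. lra. }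
  set (l := Rmax 0 (r t0 - eps / 2)). set (h := Rmin 1 (r t0 + eps / 2)).
  assert (Hl : 0 <= l /\ r t0 - eps / 2 <= l /\ l < r t0).
  { repeat split; [apply Rmax_l | apply Rmax_r | apply Rmax_lub_lt; lra]. }
  assert (Hh : h <= 1 /\ h <= r t0 + eps / 2 /\ r t0 < h).
  { repeat split; [apply Rmin_l | apply Rmin_r | apply Rmin_glb_lt; lra]. }
  destruct (unique_root_sign (g t0) (r t0) (Hcs t0) (Hg0 t0) (Hg1 t0) Hr0)
    as [Hbelow Habove]; [intros; apply Huniq; auto|].
  assert (Hgl : g t0 l < 0) by (apply Hbelow; lra).
  assert (Hgh : 0 < g t0 h) by (apply Habove; lra).
  destruct (Hct l (- g t0 l)) as (dl & Hdl & Hcl); [lra|].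
  destruct (Hct h (g t0 h)) as (dh & Hdh & Hch); [lra|].
  exists (Rmin dl dh). split; [now apply Rmin_glb_lt|].
  intros x [Hx Hxt]. simpl in *. unfold R_dist in *.
  assert (Al := Hcl x (conj Hx (Rlt_le_trans _ _ _ Hxt (Rmin_l _ _)))).
  assert (Ah := Hch x (conj Hx (Rlt_le_trans _ _ _ Hxt (Rmin_r _ _)))).
  simpl in Al, Ah. unfold R_dist in Al, Ah.
  apply Rabs_def2 in Al as [Al _]. apply Rabs_def2 in Ah as [_ Ah].
  destruct (IVT (g x) l h (Hcs x) ltac:(lra) ltac:(lra) ltac:(lra)) as (z & Hz & Hgz).
  apply Huniq in Hgz; [|lra]. subst z. apply Rabs_def1; lra.
Qed.

Section NormedPlane.
Variable N : pt -> R.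
Hypothesis HN : is_norm N.

Lemma norm_nonneg x : 0 <= N x.
Proof. apply HN. Qed.

Lemma norm_eq0 x : N x = 0 -> x = p0.
Proof. apply HN. Qed.

Lemma norm_scale k x : N (pscale k x) = Rabs k * N x.
Proof. apply HN. Qed.

Lemma norm_triangle x y : N (padd x y) <= N x + N y.
Proof. apply HN. Qed.

Lemma norm_p0 : N p0 = 0.
Proof. replace p0 with (pscale 0 p0) by pt_ring. rewrite norm_scale, Rabs_R0; ring. Qed.

Lemma norm_pos x : x <> p0 -> 0 < N x.
Proof. intros Hx. destruct (norm_nonneg x); auto. now exfalso; apply Hx, norm_eq0. Qed.

Lemma norm_opp x : N (psub p0 x) = N x.
Proof.
  replace (psub p0 x) with (pscale (-1) x) by pt_ring.
  rewrite norm_scale, Rabs_left by lra; ring.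
Qed.

Lemma norm_psub_sym x y : N (psub x y) = N (psub y x).
Proof. replace (psub x y) with (psub p0 (psub y x)) by pt_ring. apply norm_opp. Qed.

Lemma norm_psub_padd_l x y : N (psub x (padd x y)) = N y.
Proof. replace (psub x (padd x y)) with (psub p0 y) by pt_ring. apply norm_opp. Qed.

Lemma norm_psub_padd_r x y : N (psub y (padd x y)) = N x.
Proof. replace (psub y (padd x y)) with (psub p0 x) by pt_ring. apply norm_opp. Qed.

Lemma norm_reverse_triangle x y : Rabs (N x - N y) <= N (psub x y).
Proof.
  assert (Hx := norm_triangle (psub x y) y). assert (Hy := norm_triangle (psub y x) x).
  replace (padd (psub x y) y) with x in Hx by pt_ring.
  replace (padd (psub y x) x) with y in Hy by pt_ring.
  rewrite norm_psub_sym in Hy. apply Rabs_le; lra.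
Qed.

Lemma norm_le_coords x :
  N x <= Rabs (fst x) * N (1, 0) + Rabs (snd x) * N (0, 1).
Proof.
  replace x with (padd (pscale (fst x) (1, 0)) (pscale (snd x) (0, 1))) at 1 by pt_ring.
  rewrite <- !norm_scale. apply norm_triangle.
Qed.

Lemma norm_continuity_pt F t :
  pt_continuity_pt F t -> continuity_pt (fun x => N (F x)) t.
Proof.
  intros [H1 H2] eps Heps.
  assert (He1 := norm_nonneg (1, 0)). assert (He2 := norm_nonneg (0, 1)).
  set (e := eps / (N (1, 0) + N (0, 1) + 1)).
  assert (He : 0 < e) by (apply Rdiv_lt_0_compat; lra).
  assert (Heps' : e * N (1, 0) + e * N (0, 1) < eps).
  { unfold e. apply (Rmult_lt_reg_r (N (1, 0) + N (0, 1) + 1)); [lra|].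
    field_simplify; lra. }
  destruct (H1 e He) as (a1 & Ha1 & Hd1). destruct (H2 e He) as (a2 & Ha2 & Hd2).
  exists (Rmin a1 a2). split; [now apply Rmin_glb_lt|].
  intros x [Hx Hxt]. simpl in *. unfold R_dist in *.
  assert (A1 := Hd1 x (conj Hx (Rlt_le_trans _ _ _ Hxt (Rmin_l _ _)))).
  assert (A2 := Hd2 x (conj Hx (Rlt_le_trans _ _ _ Hxt (Rmin_r _ _)))).
  simpl in A1, A2. unfold R_dist in A1, A2.
  eapply Rle_lt_trans; [apply norm_reverse_triangle|].
  eapply Rle_lt_trans; [apply norm_le_coords|]. unfold psub; simpl.
  eapply Rle_lt_trans; [|exact Heps'].
  apply Rplus_le_compat; apply Rmult_le_compat_r; lra.
Qed.

Variable d : R.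
Hypothesis hd : 0 < d.

Definition rescale (x : pt) : pt := pscale (d / N x) x.

Lemma rescale_factor_pos x : x <> p0 -> 0 < d / N x.
Proof. intros Hx. apply Rdiv_lt_0_compat; [lra|now apply norm_pos]. Qed.

Lemma norm_rescale x : x <> p0 -> N (rescale x) = d.
Proof.
  intros Hx. assert (Hpos := norm_pos x Hx). assert (Hk := rescale_factor_pos x Hx).
  unfold rescale. rewrite norm_scale, Rabs_right by lra. field; lra.
Qed.

Lemma rescale_id x : N x = d -> rescale x = x.
Proof. intros Hx. unfold rescale. rewrite Hx. pt_ring. Qed.

Lemma rescale_opp x : rescale (pscale (-1) x) = pscale (-1) (rescale x).
Proof.
  unfold rescale. rewrite norm_scale, Rabs_left by lra.
  replace (- -1 * N x) with (N x) by ring.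
  apply injective_projections; unfold pscale; simpl; ring.
Qed.

Lemma pt_continuity_pt_rescale F t :
  pt_continuity_pt F t -> F t <> p0 -> pt_continuity_pt (fun x => rescale (F x)) t.
Proof.
  intros HF HFt. apply pt_continuity_pt_pscale; [|exact HF].
  apply continuity_pt_div; [apply continuity_pt_cst| |].
  - now apply norm_continuity_pt.
  - apply Rgt_not_eq, norm_pos, HFt.
Qed.

Lemma padd_equilateral_neq0 x y : N x = d -> N (psub x y) = d -> padd x y <> p0.
Proof.
  intros Hx Hxy Hsum.
  replace (psub x y) with (pscale 2 x) in Hxy.
  - rewrite norm_scale, Hx, Rabs_right in Hxy; lra.
  - apply (f_equal fst) in Hsum as H1. apply (f_equal snd) in Hsum as H2.
    unfold padd, p0 in H1, H2; simpl in H1, H2.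
    apply injective_projections; unfold psub, pscale; simpl; lra.
Qed.

Lemma equilateral_det_neq0 x y :
  N x = d -> N y = d -> N (psub x y) = d -> det x y <> 0.
Proof.
  intros Hx Hy Hxy Hdet.
  assert (Hx0 : x <> p0) by (intros E; rewrite E, norm_p0 in Hx; lra).
  assert (Hq := sqnorm_pos x Hx0). unfold sqnorm in Hq.
  set (k := (fst x * fst y + snd x * snd y) / (fst x * fst x + snd x * snd x)).
  assert (Ey : y = pscale k x).
  { assert (E : fst x * snd y = snd x * fst y) by (unfold det in Hdet; lra).
    unfold k, pscale. apply injective_projections; simpl; field_simplify_eq; try lra.
    - replace (fst x * snd x * snd y) with (snd x * (fst x * snd y)) by ring.
      rewrite E; ring.
    - replace (fst x * fst y * snd x) with (fst x * (snd x * fst y)) by ring.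
      rewrite <- E; ring. }
  rewrite Ey in Hy, Hxy. rewrite norm_scale, Hx in Hy.
  replace (psub x (pscale k x)) with (pscale (1 - k) x) in Hxy by pt_ring.
  rewrite norm_scale, Hx in Hxy.
  assert (Hk : Rabs k = 1) by (apply (Rmult_eq_reg_r d); lra).
  assert (Hk' : Rabs (1 - k) = 1) by (apply (Rmult_eq_reg_r d); lra).
  revert Hk Hk'. unfold Rabs. destruct (Rcase_abs k), (Rcase_abs (1 - k)); lra.
Qed.

Hypothesis HU : URTC N.

Lemma common_neighbors_at_most_two a b :
  N (psub a b) = d -> exists x1 x2 : pt,
    forall x, N (psub a x) = d -> N (psub b x) = d -> x = x1 \/ x = x2.
Proof.
  intros Hab.
  assert (Hshrink : forall p q, N (psub (pscale (/ d) p) (pscale (/ d) q)) = / d * N (psub p q)).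
  { intros p q. replace (psub (pscale (/ d) p) (pscale (/ d) q)) with (pscale (/ d) (psub p q))
      by pt_ring.
    rewrite norm_scale, Rabs_right; [ring|]. apply Rle_ge, Rlt_le, Rinv_0_lt_compat, hd. }
  destruct (HU (pscale (/ d) a) (pscale (/ d) b)) as (y1 & y2 & _ & Hiff).
  { rewrite Hshrink, Hab. field; lra. }
  exists (pscale d y1), (pscale d y2). intros x Hax Hbx.
  destruct (proj1 (Hiff (pscale (/ d) x))) as [E|E].
  - rewrite !Hshrink, Hax, Hbx. split; field; lra.
  - left. rewrite <- E. pt_ring.
  - right. rewrite <- E. pt_ring.
Qed.

(* Reflecting [x] through the midpoint of [ab] gives a second common neighbour,
   and the two differ since [N (a - b) <> N (a - b) / 2]. *)
Lemma third_vertex_cases a b x y :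
  N (psub a b) = d -> N (psub a x) = d -> N (psub b x) = d ->
  N (psub a y) = d -> N (psub b y) = d -> y = x \/ y = psub (padd a b) x.
Proof.
  intros Hab Hax Hbx Hay Hby.
  set (x' := psub (padd a b) x).
  assert (Hax' : N (psub a x') = d).
  { unfold x'. replace (psub a (psub (padd a b) x)) with (psub x b) by pt_ring.
    rewrite norm_psub_sym; exact Hbx. }
  assert (Hbx' : N (psub b x') = d).
  { unfold x'. replace (psub b (psub (padd a b) x)) with (psub x a) by pt_ring.
    rewrite norm_psub_sym; exact Hax. }
  assert (Hxx' : x <> x').
  { intros E. apply (f_equal fst) in E as E1. apply (f_equal snd) in E as E2.
    unfold x', psub, padd in E1, E2; simpl in E1, E2.
    replace (psub a x) with (pscale (/ 2) (psub a b)) in Hax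
      by (apply injective_projections; unfold psub, pscale; simpl; lra).
    rewrite norm_scale, Hab, Rabs_right in Hax; lra. }
  destruct (common_neighbors_at_most_two a b Hab) as (x1 & x2 & Htwo).
  destruct (Htwo x Hax Hbx), (Htwo x' Hax' Hbx'), (Htwo y Hay Hby);
    solve [left; congruence | right; congruence | exfalso; congruence].
Qed.

Lemma equilateral_apex x y z :
  N x = d -> N y = d -> N (psub x y) = d ->
  N (psub x z) = d -> N (psub y z) = d -> z = p0 \/ z = padd x y.
Proof.
  intros Hx Hy Hxy Hxz Hyz.
  assert (Hsub0 : forall w, psub w p0 = w) by (intros; pt_ring).
  destruct (third_vertex_cases x y p0 z) as [|Hz]; rewrite ?Hsub0; auto.
  right. rewrite Hz, Hsub0. reflexivity.
Qed.

Lemma ccw_third_vertex_unique c x y :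
  N c = d -> N x = d -> N (psub c x) = d -> 0 < det c x ->
  N y = d -> N (psub c y) = d -> 0 < det c y -> y = x.
Proof.
  intros Hc Hx Hcx Hdx Hy Hcy Hdy.
  destruct (third_vertex_cases p0 c x y) as [|Hyx]; rewrite ?norm_opp; auto.
  exfalso. rewrite Hyx in Hdy.
  replace (psub (padd p0 c) x) with (psub c x) in Hdy by pt_ring.
  unfold det, psub in Hdx, Hdy; simpl in Hdy. lra.
Qed.

Lemma norm_padd_equilateral_neq x y :
  N x = d -> N y = d -> N (psub x y) = d -> N (padd x y) <> d.
Proof.
  intros Hx Hy Hxy Hsum.
  assert (Hsy : N (psub (padd x y) y) = d)
    by (replace (psub (padd x y) y) with x by pt_ring; exact Hx).
  destruct (equilateral_apex x (padd x y) y) as [Hy0|Hyx];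
    rewrite ?norm_psub_padd_l; auto.
  - rewrite Hy0, norm_p0 in Hy. lra.
  - replace x with p0 in Hx.
    + rewrite norm_p0 in Hx. lra.
    + apply (f_equal fst) in Hyx as E1. apply (f_equal snd) in Hyx as E2.
      unfold padd in E1, E2; simpl in E1, E2.
      apply injective_projections; unfold p0; simpl; lra.
Qed.

Lemma probe_third_vertex b1 b2 b3 c1 c2 c3 :
  probe N d p0 b1 b2 b3 c1 c2 c3 -> b3 = padd b1 b2.
Proof.
  unfold probe. rewrite !norm_opp.
  intros (Hb1 & Hb2 & Hb12 & Hb13 & Hb23 & Hc1 & Hc2 & Hc12 & Hc13 & Hc23 & Hbc).
  destruct (equilateral_apex b1 b2 b3) as [Hb3|Hb3]; auto.
  exfalso. subst b3. rewrite norm_opp in Hbc.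
  destruct (equilateral_apex c1 c2 c3) as [Hc3|Hc3]; auto; subst c3.
  - rewrite norm_p0 in Hbc. lra.
  - now apply (norm_padd_equilateral_neq c1 c2).
Qed.

Definition gap (c : pt) (s : R) : R := N (psub (rescale c) (rescale (turn c s))) - d.

Lemma gap_0_neg c : c <> p0 -> gap c 0 < 0.
Proof.
  intros Hc. unfold gap. rewrite turn_0.
  replace (psub (rescale c) (rescale c)) with p0 by pt_ring. rewrite norm_p0. lra.
Qed.

Lemma gap_1_pos c : c <> p0 -> 0 < gap c 1.
Proof.
  intros Hc. unfold gap. rewrite turn_1, rescale_opp.
  replace (psub (rescale c) (pscale (-1) (rescale c))) with (pscale 2 (rescale c))
    by pt_ring.
  rewrite norm_scale, norm_rescale, Rabs_right by (auto; lra). lra.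
Qed.

Lemma gap_continuity c : c <> p0 -> continuity (gap c).
Proof.
  intros Hc s. unfold gap.
  apply continuity_pt_minus; [|apply continuity_pt_cst].
  apply norm_continuity_pt, pt_continuity_pt_psub; [apply pt_continuity_pt_const|].
  apply pt_continuity_pt_rescale; [|now apply turn_neq0].
  apply pt_continuity_pt_turn; [apply pt_continuity_pt_const|apply continuity_pt_identity].
Qed.

Lemma det_rescale_pos a b : a <> p0 -> b <> p0 -> 0 < det a b -> 0 < det (rescale a) (rescale b).
Proof.
  intros Ha Hb Hab. unfold rescale. rewrite det_scale.
  apply Rmult_lt_0_compat; [apply Rmult_lt_0_compat|]; auto using rescale_factor_pos.
Qed.

Lemma gap_root_interior c s : c <> p0 -> 0 <= s <= 1 -> gap c s = 0 -> 0 < s < 1.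
Proof.
  intros Hc Hs Hgap. assert (H0 := gap_0_neg c Hc). assert (H1 := gap_1_pos c Hc).
  destruct (Req_dec s 0) as [E|]; [rewrite E in Hgap; lra|].
  destruct (Req_dec s 1) as [E|]; [rewrite E in Hgap; lra|]. lra.
Qed.

Lemma gap_root_vertex c s x :
  c <> p0 -> 0 <= s <= 1 -> gap c s = 0 ->
  N x = d -> N (psub (rescale c) x) = d -> 0 < det c x -> rescale (turn c s) = x.
Proof.
  intros Hc Hs Hgap Hx Hcx Hdet.
  assert (Hs' := gap_root_interior c s Hc Hs Hgap).
  assert (Hx0 : x <> p0) by (intros E; rewrite E, norm_p0 in Hx; lra).
  apply (ccw_third_vertex_unique (rescale c)); auto using norm_rescale, turn_neq0.
  - rewrite <- (rescale_id x Hx). apply det_rescale_pos; auto.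
  - unfold gap in Hgap. lra.
  - apply det_rescale_pos; auto using turn_neq0.
    rewrite det_turn. assert (Hq := sqnorm_pos c Hc).
    apply Rmult_lt_0_compat; [|exact Hq]. nra.
Qed.

Lemma gap_root_unique c s s' :
  c <> p0 -> 0 <= s <= 1 -> 0 <= s' <= 1 -> gap c s = 0 -> gap c s' = 0 -> s = s'.
Proof.
  intros Hc Hs Hs' Hgap Hgap'.
  assert (Hin := gap_root_interior c s Hc Hs Hgap).
  assert (Hin' := gap_root_interior c s' Hc Hs' Hgap').
  assert (Ht := turn_neq0 c s Hc). assert (Ht' := turn_neq0 c s' Hc).
  assert (Hq := sqnorm_pos c Hc).
  assert (E : rescale (turn c s) = rescale (turn c s')).
  { apply (gap_root_vertex c s); auto using norm_rescale.
    - unfold gap in Hgap'. lra.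
    - unfold rescale. rewrite det_scale_r, det_turn.
      apply Rmult_lt_0_compat; [now apply rescale_factor_pos|].
      apply Rmult_lt_0_compat; [nra|exact Hq]. }
  assert (Hdet : det (rescale (turn c s)) (rescale (turn c s')) = 0)
    by (rewrite E; unfold det; ring).
  unfold rescale in Hdet. rewrite det_scale, det_turn_turn in Hdet.
  assert (Hk := rescale_factor_pos _ Ht). assert (Hk' := rescale_factor_pos _ Ht').
  assert (Hpos : 0 < (1 - s) * (1 - s') + s * s') by nra.
  apply Rmult_integral in Hdet as [Hk0|Hdet]; [nra|].
  apply Rmult_integral in Hdet as [Hdet|]; [|lra].
  apply Rmult_integral in Hdet as [Hdet|]; [|lra]. lra.
Qed.

Section CounterClockwisePair.
Variables u v : pt.
Hypotheses (hu : N u = d) (hv : N v = d) (huv : N (psub u v) = d) (hdet : 0 < det u v).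

Definition chord (t : R) : pt := padd (pscale (1 - t) u) (pscale t v).

Lemma chord_neq0 t : chord t <> p0.
Proof.
  intros E.
  assert (Hu : det u (chord t) = t * det u v) by (unfold det, chord, padd, pscale; simpl; ring).
  assert (Hv : det (chord t) v = (1 - t) * det u v)
    by (unfold det, chord, padd, pscale; simpl; ring).
  replace (det u (chord t)) with 0 in Hu by (rewrite E; unfold det, p0; simpl; ring).
  replace (det (chord t) v) with 0 in Hv by (rewrite E; unfold det, p0; simpl; ring).
  lra.
Qed.

Lemma pt_continuity_pt_chord t : pt_continuity_pt chord t.
Proof.
  unfold chord. apply pt_continuity_pt_padd; apply pt_continuity_pt_pscale;
    auto using pt_continuity_pt_const; real_continuity.
Qed.

Definition turn_root (t : R) : R :=
  proj1_sig (IVT (gap (chord t)) 0 1 (gap_continuity _ (chord_neq0 t)) Rlt_0_1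
                 (gap_0_neg _ (chord_neq0 t)) (gap_1_pos _ (chord_neq0 t))).

Lemma turn_root_spec t : 0 <= turn_root t <= 1 /\ gap (chord t) (turn_root t) = 0.
Proof. exact (proj2_sig (IVT _ _ _ _ _ _ _)). Qed.

Lemma turn_root_continuity t : continuity_pt turn_root t.
Proof.
  apply (unique_root_continuity_pt (fun t s => gap (chord t) s)).
  - intros s. unfold gap.
    apply continuity_pt_minus; [|apply continuity_pt_cst].
    apply norm_continuity_pt, pt_continuity_pt_psub; apply pt_continuity_pt_rescale;
      auto using pt_continuity_pt_chord, chord_neq0, turn_neq0.
    apply pt_continuity_pt_turn; auto using pt_continuity_pt_chord.
    apply continuity_pt_cst.
  - intros t'. apply gap_continuity, chord_neq0.
  - intros t'. apply gap_0_neg, chord_neq0.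
  - intros t'. apply gap_1_pos, chord_neq0.
  - apply turn_root_spec.
  - intros t' s Hs Hgap. destruct (turn_root_spec t') as [Hs' Hgap'].
    exact (gap_root_unique _ _ _ (chord_neq0 t') Hs Hs' Hgap Hgap').
Qed.

Definition vertex1 (t : R) : pt := rescale (chord t).
Definition vertex2 (t : R) : pt := rescale (turn (chord t) (turn_root t)).

Definition sum_gap (t : R) : R := N (psub (padd u v) (padd (vertex1 t) (vertex2 t))) - d.

Lemma sum_gap_continuity t : continuity_pt sum_gap t.
Proof.
  unfold sum_gap, vertex1, vertex2.
  apply continuity_pt_minus; [|apply continuity_pt_cst].
  apply norm_continuity_pt, pt_continuity_pt_psub; [apply pt_continuity_pt_const|].
  apply pt_continuity_pt_padd; apply pt_continuity_pt_rescale;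
    auto using pt_continuity_pt_chord, chord_neq0, turn_neq0.
  apply pt_continuity_pt_turn; auto using pt_continuity_pt_chord, turn_root_continuity.
Qed.

Lemma vertex1_0 : vertex1 0 = u.
Proof.
  unfold vertex1. replace (chord 0) with u by (unfold chord; pt_ring).
  now apply rescale_id.
Qed.

Lemma vertex1_1 : vertex1 1 = v.
Proof.
  unfold vertex1. replace (chord 1) with v by (unfold chord; pt_ring).
  now apply rescale_id.
Qed.

Lemma vertex2_of_root t x :
  N x = d -> N (psub (vertex1 t) x) = d -> 0 < det (chord t) x -> vertex2 t = x.
Proof.
  destruct (turn_root_spec t). intros. apply gap_root_vertex; auto using chord_neq0.
Qed.

Lemma sum_gap_0_neg : sum_gap 0 < 0.
Proof.
  assert (E : vertex2 0 = v).
  { apply vertex2_of_root; rewrite ?vertex1_0; auto.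
    replace (chord 0) with u by (unfold chord; pt_ring). exact hdet. }
  unfold sum_gap. rewrite vertex1_0, E.
  replace (psub (padd u v) (padd u v)) with p0 by pt_ring. rewrite norm_p0. lra.
Qed.

Lemma sum_gap_1_nonneg : 0 <= sum_gap 1.
Proof.
  assert (E : vertex2 1 = psub v u).
  { apply vertex2_of_root; rewrite ?vertex1_1.
    - rewrite norm_psub_sym. exact huv.
    - replace (psub v (psub v u)) with u by pt_ring. exact hu.
    - replace (chord 1) with v by (unfold chord; pt_ring).
      unfold det, psub in *; simpl. lra. }
  unfold sum_gap. rewrite vertex1_1, E.
  replace (psub (padd u v) (padd v (psub v u))) with (psub (pscale 2 u) v) by pt_ring.
  assert (Htri := norm_reverse_triangle (pscale 2 u) v).
  rewrite norm_scale, hu, hv, (Rabs_right 2) in Htri by lra.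
  pose proof (Rle_abs (2 * d - d)). lra.
Qed.

Lemma equilateral_pair_at_sum_ccw :
  exists x y, N x = d /\ N y = d /\ N (psub x y) = d /\
    N (psub (padd u v) (padd x y)) = d.
Proof.
  assert (Hroot : exists t, sum_gap t = 0).
  { destruct sum_gap_1_nonneg as [Hpos|Hzero]; [|eauto].
    destruct (IVT sum_gap 0 1 sum_gap_continuity Rlt_0_1 sum_gap_0_neg Hpos) as (t & _ & Ht).
    eauto. }
  destruct Hroot as [t Ht]. destruct (turn_root_spec t) as [_ Hgap].
  exists (vertex1 t), (vertex2 t). unfold sum_gap, gap, vertex1, vertex2 in *.
  repeat split; auto using norm_rescale, chord_neq0, turn_neq0; lra.
Qed.

End CounterClockwisePair.

Lemma equilateral_pair_at_sum u v :
  N u = d -> N v = d -> N (psub u v) = d ->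
  exists x y, N x = d /\ N y = d /\ N (psub x y) = d /\
    N (psub (padd u v) (padd x y)) = d.
Proof.
  intros Hu Hv Huv.
  destruct (Rtotal_order (det u v) 0) as [Hneg|[Hzero|Hpos]].
  - replace (padd u v) with (padd v u) by pt_ring.
    apply equilateral_pair_at_sum_ccw; auto.
    + rewrite norm_psub_sym. exact Huv.
    + unfold det in *. lra.
  - exfalso. exact (equilateral_det_neq0 u v Hu Hv Huv Hzero).
  - apply equilateral_pair_at_sum_ccw; auto.
Qed.

End NormedPlane.

Theorem lemma4 (N : pt -> R) (HN : is_norm N) (HU : URTC N)
  (d : R) (hd : 0 < d) (b1 b2 : pt)
  (h1 : N b1 = d) (h2 : N b2 = d) (h12 : N (psub b1 b2) = d) :
  (exists b3 c1 c2 c3 : pt, probe N d p0 b1 b2 b3 c1 c2 c3) /\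
  (forall b3 c1 c2 c3 : pt, probe N d p0 b1 b2 b3 c1 c2 c3 -> b3 = padd b1 b2) /\
  padd b1 b2 <> p0.
Proof.
  split; [|split].
  - destruct (equilateral_pair_at_sum N HN d hd HU b1 b2) as (x & y & Hx & Hy & Hxy & Hs);
      auto.
    exists (padd b1 b2), x, y, (padd x y).
    unfold probe. rewrite !(norm_opp N HN), !(norm_psub_padd_l N HN), !(norm_psub_padd_r N HN).
    repeat split; auto.
  - intros b3 c1 c2 c3. apply (probe_third_vertex N HN d hd HU).
  - exact (padd_equilateral_neq0 N HN d hd b1 b2 h1 h12).
Qed.
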